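(* The partially ordered set $(\mathcal{C}_{m,n},\le)$ is a lattice.
   Context: $\mathcal{C}_{m,n}$ is the set of all convex $m\times n$ $(0,1)$-matrices (matrices in which the 1's in every row and every column occur consecutively), and $\le$ is the entrywise partial order. *)

From mathcomp Require Import all_boot all_algebra.
Set Implicit Arguments. Unset Strict Implicit. Unset Printing Implicit Defensive.

(* (0,1)-matrices are represented as boolean matrices 'M[bool]_(m, n):
   entry true = 1, false = 0. *)

Definition row_convex m n (A : 'M[bool]_(m, n)) : Prop :=
  forall (i : 'I_m) (j1 j j2 : 'I_n),
    j1 <= j <= j2 -> A i j1 -> A i j2 -> A i j.

Definition col_convex m n (A : 'M[bool]_(m, n)) : Prop :=
  forall (j : 'I_n) (i1 i i2 : 'I_m),
    i1 <= i <= i2 -> A i1 j -> A i2 j -> A i j.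

Definition convex_mx m n (A : 'M[bool]_(m, n)) : Prop :=
  row_convex A /\ col_convex A.

Definition mx_le m n (A B : 'M[bool]_(m, n)) : Prop :=
  forall i j, A i j -> B i j.

Definition is_convex_join m n (A B X : 'M[bool]_(m, n)) : Prop :=
  [/\ convex_mx X, mx_le A X, mx_le B X &
      forall C, convex_mx C -> mx_le A C -> mx_le B C -> mx_le X C].

Definition is_convex_meet m n (A B X : 'M[bool]_(m, n)) : Prop :=
  [/\ convex_mx X, mx_le X A, mx_le X B &
      forall C, convex_mx C -> mx_le C A -> mx_le C B -> mx_le C X].

From mathcomp Require Import all_boot all_algebra.
Set Implicit Arguments. Unset Strict Implicit. Unset Printing Implicit Defensive.

(* Convexity is preserved by entrywise intersections, so the meet of A and B
   is their entrywise intersection, and the join is the intersection of the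
   (finitely many) convex matrices above both A and B. *)

Section ConvexMatrices.

Variables m n : nat.
Implicit Types (A B C D : 'M[bool]_(m, n)) (P : pred 'M[bool]_(m, n)).

Definition row_convexb A : bool :=
  [forall i : 'I_m, forall j1 : 'I_n, forall j : 'I_n, forall j2 : 'I_n,
     [&& j1 <= j <= j2, A i j1 & A i j2] ==> A i j].

Definition col_convexb A : bool :=
  [forall j : 'I_n, forall i1 : 'I_m, forall i : 'I_m, forall i2 : 'I_m,
     [&& i1 <= i <= i2, A i1 j & A i2 j] ==> A i j].

Definition convex_mxb A : bool := row_convexb A && col_convexb A.

Definition mx_leb A B : bool := [forall i, forall j, A i j ==> B i j].

Lemma row_convexP A : reflect (row_convex A) (row_convexb A).
Proof.
apply: (iffP 'forall_'forall_'forall_'forall_implyP)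
  => [rA i j1 j j2 hj a1 a2 | rA i j1 j j2].
  by apply: (rA i j1 j j2); rewrite hj a1 a2.
by case/and3P; apply: rA.
Qed.

Lemma col_convexP A : reflect (col_convex A) (col_convexb A).
Proof.
apply: (iffP 'forall_'forall_'forall_'forall_implyP)
  => [cA j i1 i i2 hi a1 a2 | cA j i1 i i2].
  by apply: (cA j i1 i i2); rewrite hi a1 a2.
by case/and3P; apply: cA.
Qed.

Lemma convex_mxP A : reflect (convex_mx A) (convex_mxb A).
Proof. by apply: (iffP andP) => -[/row_convexP rA /col_convexP cA]. Qed.

Lemma mx_leP A B : reflect (mx_le A B) (mx_leb A B).
Proof. exact: (iffP 'forall_'forall_implyP). Qed.

Definition mx_cap P : 'M[bool]_(m, n) := \matrix_(i, j) [forall (C | P C), C i j].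

Lemma mx_cap_le P C : P C -> mx_le (mx_cap P) C.
Proof. by move=> PC i j; rewrite mxE => /forall_inP; apply. Qed.

Lemma mx_le_cap P D : (forall C, P C -> mx_le D C) -> mx_le D (mx_cap P).
Proof. by move=> leD i j Dij; rewrite mxE; apply/forall_inP => C /leD; apply. Qed.

Lemma row_convex_cap P : (forall C, P C -> row_convex C) -> row_convex (mx_cap P).
Proof.
move=> rP i j1 j j2 hj; rewrite !mxE => /forall_inP cap1 /forall_inP cap2.
by apply/forall_inP => C PC; apply: (rP C PC i j1 j j2 hj); [apply: cap1 | apply: cap2].
Qed.

Lemma col_convex_cap P : (forall C, P C -> col_convex C) -> col_convex (mx_cap P).
Proof.
move=> cP j i1 i i2 hi; rewrite !mxE => /forall_inP cap1 /forall_inP cap2.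
by apply/forall_inP => C PC; apply: (cP C PC j i1 i i2 hi); [apply: cap1 | apply: cap2].
Qed.

Lemma convex_mx_cap P : (forall C, P C -> convex_mx C) -> convex_mx (mx_cap P).
Proof.
move=> convP; split; [apply: row_convex_cap | apply: col_convex_cap];
  by move=> C /convP [].
Qed.

Definition convex_ub A B : pred 'M[bool]_(m, n) :=
  [pred C | [&& convex_mxb C, mx_leb A C & mx_leb B C]].

Lemma convex_ubP A B C :
  reflect [/\ convex_mx C, mx_le A C & mx_le B C] (convex_ub A B C).
Proof. by apply: (iffP and3P) => -[/convex_mxP cC /mx_leP leAC /mx_leP leBC]. Qed.

Lemma convex_join_cap A B : is_convex_join A B (mx_cap (convex_ub A B)).
Proof.
split.
- by apply: convex_mx_cap => C /convex_ubP [].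
- by apply: mx_le_cap => C /convex_ubP [].
- by apply: mx_le_cap => C /convex_ubP [].
- by move=> C cC leAC leBC; apply: mx_cap_le; apply/convex_ubP.
Qed.

Lemma convex_meet_cap A B :
  convex_mx A -> convex_mx B -> is_convex_meet A B (mx_cap (pred2 A B)).
Proof.
move=> cA cB; split.
- by apply: convex_mx_cap => C /pred2P [] ->.
- by apply: mx_cap_le; rewrite /= eqxx.
- by apply: mx_cap_le; rewrite /= eqxx orbT.
- by move=> C _ leCA leCB; apply: mx_le_cap => D /pred2P [] ->.
Qed.

End ConvexMatrices.

Theorem mainTheorem12 (m n : nat) (A B : 'M[bool]_(m, n)) :
  convex_mx A -> convex_mx B ->
  (exists X, is_convex_join A B X) /\ (exists Y, is_convex_meet A B Y).
Proof.
move=> cA cB; split; first by exists (mx_cap (convex_ub A B)); apply: convex_join_cap.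
by exists (mx_cap (pred2 A B)); apply: convex_meet_cap.
Qed.
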